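(* Let $n$ be a nonnegative integer and $a,c\in\mathbb{C}$ such that all expressions below are defined (no lower parameter zero or a negative integer). Then \[ {}_3F_2\!\left(\left.{-n,a,c \atop \frac{a-n}{2},\frac{1+a-n}{2}}\right| \frac{1}{4}\right) =\frac{(1+2c-a)_n}{(1-a)_n}\,{}_3F_2\!\left(\left.{-n,1+2c-a+n,c \atop \frac{1+2c-a}{2},\frac{2+2c-a}{2}}\right| \frac{1}{4}\right). \] Equivalently, with $M_n(a,c)=(1-a)_n(1+c-a)_n\,{}_3F_2\!\left(\left.{-n,a,c \atop \frac{a-n}{2},\frac{1+a-n}{2}}\right| \frac{1}{4}\right)$ one has $M_n(a,c)=M_n(1+2c-a+n,c)$, and $L_n(x,y)=M_n\!\left(x,\frac{x+y-n-1}{2}\right)$ satisfies $L_n(x,y)=L_n(y,x)$.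
   Context: For $a\in\mathbb{C}$, $(a)_0=1$ and $(a)_k=a(a+1)\cdots(a+k-1)$ for $k\ge1$. The hypergeometric series is ${}_rF_s\!\left(\left.{\alpha_1,\ldots,\alpha_r\atop \beta_1,\ldots,\beta_s}\right|z\right)=\sum_{k\ge0}\frac{(\alpha_1)_k\cdots(\alpha_r)_k}{k!(\beta_1)_k\cdots(\beta_s)_k}z^k$, with no lower parameter zero or a negative integer; when an upper parameter is $-n$ it is a finite sum over $0\le k\le n$. *)

From mathcomp Require Import all_boot all_order all_algebra.
From mathcomp Require Import complex.
From mathcomp Require Import reals.
Set Implicit Arguments. Unset Strict Implicit. Unset Printing Implicit Defensive.
Import Order.TTheory GRing.Theory Num.Theory.
Local Open Scope ring_scope.

Definition poch {F : ringType} (a : F) (k : nat) : F :=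
  \prod_(i < k) (a + i%:R).

Definition lower_ok {F : ringType} (b : F) : Prop :=
  forall m : nat, b <> - m%:R.

Definition F32 {F : fieldType} (n : nat) (a2 a3 b1 b2 z : F) : F :=
  \sum_(k < n.+1)
    (poch (- n%:R) k * poch a2 k * poch a3 k)
      / (k`!%:R * poch b1 k * poch b2 k) * z ^+ k.

From mathcomp Require Import all_boot all_order all_algebra.
From mathcomp Require Import complex.
From mathcomp Require Import reals.
From mathcomp Require Import ring zify.
Import Order.TTheory GRing.Theory Num.Theory.
Set Implicit Arguments.
Unset Strict Implicit.
Unset Printing Implicit Defensive.

Local Open Scope ring_scope.

(* By Legendre duplication (x)_(2k) = 4^k (x/2)_k ((x+1)/2)_k, clearing the
   denominators of 3F2(-n, a, c; (a-n)/2, (1+a-n)/2 | 1/4) by (a-n)_n gives the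
   polynomial  binom_sum n a c = sum_k (-1)^k C(n,k) (c)_k (a+2k-n)_(n-k),  and
   the theorem becomes the reflection
     binom_sum n (1+2c-a+n) c = (-1)^n binom_sum n a c.
   This symmetry is hidden in binom_sum but termwise in
     invol_sum n a c = sum_j (-1)^j n!/(j!(n-2j)!) (c)_j (a-c-n+j)_(n-2j),
   where a |-> 1+2c-a+n is the Pochhammer reflection (x)_m = (-1)^m (1-x-m)_m.
   The two sums agree since both satisfy the same three-term recurrence in n,
   with shifts of a and c. *)

Section Pochhammer.
Variable R : comNzRingType.
Implicit Types x y : R.

Lemma poch0 x : poch x 0 = 1.
Proof. exact: big_ord0. Qed.

Lemma pochSr x k : poch x k.+1 = poch x k * (x + k%:R).
Proof. exact: big_ord_recr. Qed.

Lemma pochS x k : poch x k.+1 = x * poch (x + 1) k.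
Proof.
rewrite /poch big_ord_recl addr0; congr (_ * _).
by apply: eq_bigr => i _; rewrite lift0 -nat1r addrA.
Qed.

Lemma pochD x p q : poch x (p + q) = poch x p * poch (x + p%:R) q.
Proof.
elim: q => [|q IHq]; first by rewrite addn0 poch0 mulr1.
by rewrite addnS !pochSr IHq natrD mulrA addrA.
Qed.

Lemma poch_reflect x m : poch x m = (-1) ^+ m * poch (1 - x - m%:R) m.
Proof.
elim: m => [|m IHm]; first by rewrite !poch0 mulr1.
rewrite pochSr IHm pochS exprS.
have -> : 1 - x - m.+1%:R + 1 = 1 - x - m%:R by rewrite -natr1; ring.
ring.
Qed.

Lemma poch_pred y m : poch (y - 1) m = poch y m - m%:R * poch y m.-1.
Proof.
case: m => [|m]; first by rewrite !poch0 mul0r subr0.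
by rewrite pochS subrK pochSr -natr1 /=; ring.
Qed.

Lemma poch_opp_nat n k : poch (- n%:R : R) k = (-1) ^+ k * (n ^_ k)%:R.
Proof.
elim: k => [|k IHk]; first by rewrite poch0 ffactn0 mulr1.
rewrite pochSr IHk ffactnSr natrM exprS.
case: (ltnP n k) => [lt_nk | le_kn].
  by rewrite ffact_small // !(mulr0, mul0r).
by rewrite natrB //; ring.
Qed.
End Pochhammer.

Section NumeratorForms.
Variable R : comNzRingType.
Implicit Types a c : R.

Definition binom_sum n a c : R := \sum_(k < n.+1)
  (-1) ^+ k * 'C(n, k)%:R * poch c k * poch (a + (2 * k)%:R - n%:R) (n - k).

Lemma binom_sum_pascal n a c : binom_sum n.+1 a c = \sum_(k < n.+1)
  (-1) ^+ k * 'C(n, k)%:R * (poch c k * poch (a + (2 * k)%:R - n.+1%:R) (n.+1 - k)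
                             - poch c k.+1 * poch (a + (2 * k.+1)%:R - n.+1%:R) (n - k)).
Proof.
rewrite /binom_sum big_ord_recl.
under eq_bigr => k _ do rewrite lift0 binS natrD mulrDr !mulrDl.
have C0 : 'C(n.+1, 0) = 'C(n, 0) by rewrite !bin0.
rewrite big_split addrA /= C0.
pose f (k : 'I_n.+2) := (-1) ^+ k * 'C(n, k)%:R * poch c k
  * poch (a + (2 * k)%:R - n.+1%:R) (n.+1 - k).
rewrite -(big_ord_recl _ f) big_ord_recr /= {2}/f bin_small // mulr0n mulr0 !mul0r addr0.
rewrite -big_split /=; apply: eq_bigr => k _.
rewrite /f /= subSS exprS; ring.
Qed.

Lemma binom_sum_rec n a c :
  binom_sum n.+1 a c = (a - n.+1%:R - 2%:R * c) * binom_sum n a c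
    + 2%:R * c * binom_sum n a (c + 1) - c * binom_sum n (a + 1) (c + 1).
Proof.
rewrite binom_sum_pascal /binom_sum !mulr_sumr -big_split -sumrB /=.
apply: eq_bigr => k _; have le_kn : (k <= n)%N by rewrite -ltnS.
rewrite subSn // pochS.
have -> : a + (2 * k)%:R - n.+1%:R + 1 = a + (2 * k)%:R - n%:R by rewrite -natr1; ring.
have -> : a + (2 * k.+1)%:R - n.+1%:R = a + 1 + (2 * k)%:R - n%:R by ring.
(* Through (c+1)_(k-1), the relation c (c+1)_k = (c)_k (c+k) becomes polynomial. *)
case: (nat_of_ord k) => [|i]; first by rewrite pochS !poch0; ring.
rewrite (pochS c i.+1) (pochS c i) (pochSr (c + 1) i); ring.
Qed.

(* invol_coef n j = n! / (j! (n - 2j)!) *)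
Fixpoint invol_coef n j : nat :=
  if n is n'.+1 then
    invol_coef n' j + (if j is j'.+1 then 2 * (n' - 2 * j') * invol_coef n' j' else 0)
  else (j == 0)%N.

Lemma invol_coef_small n j : (n < 2 * j)%N -> invol_coef n j = 0%N.
Proof.
elim: n j => [|n IHn] [|j] //= lt_n2j.
rewrite IHn; last by lia.
have [/IHn -> | le_2jn] := ltnP n (2 * j); first by rewrite muln0.
by have -> : (n - 2 * j = 0)%N by lia.
Qed.

Definition invol_sum n a c : R := \sum_(j < n.+1)
  (-1) ^+ j * (invol_coef n j)%:R * poch c j * poch (a - c - n%:R + j%:R) (n - 2 * j).

Lemma invol_sum_pascal n a c : invol_sum n.+1 a c = \sum_(j < n.+1)
  (-1) ^+ j * (invol_coef n j)%:R *
    (poch c j * poch (a - c - n.+1%:R + j%:R) (n.+1 - 2 * j)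
     - (2 * (n - 2 * j))%:R * poch c j.+1 * poch (a - c - n%:R + j%:R) (n - 2 * j).-1).
Proof.
rewrite /invol_sum big_ord_recl.
under eq_bigr => j _ do rewrite lift0 /= natrD mulrDr !mulrDl.
rewrite big_split addrA /= addn0.
pose f (j : 'I_n.+2) := (-1) ^+ j * (invol_coef n j)%:R * poch c j
  * poch (a - c - n.+1%:R + j%:R) (n.+1 - 2 * j).
rewrite -(big_ord_recl _ f) big_ord_recr /= {2}/f invol_coef_small; last by rewrite /=; lia.
rewrite mulr0n mulr0 !mul0r addr0 -big_split /=; apply: eq_bigr => j _.
have -> : a - c - n.+1%:R + j.+1%:R = a - c - n%:R + j%:R by rewrite -!natr1; ring.
have -> : (n.+1 - 2 * j.+1 = (n - 2 * j).-1)%N by rewrite -subn1; lia.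
rewrite /f /= exprS natrM; ring.
Qed.

Lemma invol_sum_rec n a c :
  invol_sum n.+1 a c = (a - n.+1%:R - 2%:R * c) * invol_sum n a c
    + 2%:R * c * invol_sum n a (c + 1) - c * invol_sum n (a + 1) (c + 1).
Proof.
rewrite invol_sum_pascal /invol_sum !mulr_sumr -big_split -sumrB /=.
apply: eq_bigr => j _.
have [lt_n2j | le_2jn] := ltnP n (2 * j).
  by rewrite invol_coef_small // mulr0n; ring.
have -> : a - (c + 1) - n%:R + j%:R = (a - c - n%:R + j%:R) - 1 by ring.
have -> : a + 1 - (c + 1) - n%:R + j%:R = a - c - n%:R + j%:R by ring.
have -> : a - c - n.+1%:R + j%:R = (a - c - n%:R + j%:R) - 1 by rewrite -natr1; ring.
rewrite subSn // pochS subrK poch_pred natrM.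
case: (nat_of_ord j) => [|i]; first by rewrite pochS !poch0; ring.
rewrite (pochS c i.+1) (pochS c i) (pochSr (c + 1) i); ring.
Qed.

Lemma binom_sum_invol n a c : binom_sum n a c = invol_sum n a c.
Proof.
elim: n a c => [|n IHn] a c; first by rewrite /binom_sum /invol_sum !big_ord1 /= !poch0.
by rewrite binom_sum_rec invol_sum_rec !IHn.
Qed.

Lemma invol_sum_reflect n a c :
  invol_sum n (1 + 2%:R * c - a + n%:R) c = (-1) ^+ n * invol_sum n a c.
Proof.
rewrite /invol_sum mulr_sumr; apply: eq_bigr => j _.
have [lt_n2j | le_2jn] := ltnP n (2 * j).
  by rewrite invol_coef_small // mulr0n; ring.
rewrite [poch (_ + _ - c - _ + _) _]poch_reflect natrB // natrM.
have -> : 1 - (1 + 2%:R * c - a + n%:R - c - n%:R + j%:R) - (n%:R - 2%:R * j%:R)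
  = a - c - n%:R + j%:R by ring.
have -> : (-1) ^+ n = (-1) ^+ (n - 2 * j) :> R.
  by rewrite -{1}(subnK le_2jn) exprD exprM sqrrN !expr1n mulr1.
ring.
Qed.

Lemma binom_sum_reflect n a c :
  binom_sum n (1 + 2%:R * c - a + n%:R) c = (-1) ^+ n * binom_sum n a c.
Proof. by rewrite !binom_sum_invol invol_sum_reflect. Qed.

End NumeratorForms.

Section CharacteristicZero.
Variable F : numFieldType.
Implicit Types x : F.

Lemma poch_neq0 x k : lower_ok x -> poch x k != 0.
Proof.
move=> ok_x; elim: k => [|k IHk]; first by rewrite poch0 oner_eq0.
by rewrite pochSr mulf_neq0 // addr_eq0; apply/eqP/ok_x.
Qed.

Lemma lower_ok_halves x :
  lower_ok (x / 2%:R) -> lower_ok ((x + 1) / 2%:R) -> lower_ok x.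
Proof.
have nz2 : 2%:R != 0 :> F by rewrite pnatr_eq0.
move=> ok_even ok_odd m x_eq; rewrite -(odd_double_half m) -muln2 natrD natrM in x_eq.
case: (odd m) x_eq => /= x_eq.
  by apply: (ok_odd m./2); rewrite x_eq; field.
by apply: (ok_even m./2); rewrite x_eq; field.
Qed.

Lemma poch_double x k :
  poch x (2 * k) = poch (x / 2%:R) k * poch ((x + 1) / 2%:R) k * 4%:R ^+ k.
Proof.
have nz2 : 2%:R != 0 :> F by rewrite pnatr_eq0.
elim: k => [|k IHk]; first by rewrite !poch0 !mulr1.
rewrite mulnS add2n !pochSr IHk exprS -natr1 !natrM.
by field.
Qed.

Lemma F32_binom_sum n x c b1 b2 :
  b1 = (x - n%:R) / 2%:R -> b2 = (1 + x - n%:R) / 2%:R ->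
  lower_ok b1 -> lower_ok b2 ->
  F32 n x c b1 b2 4%:R^-1 * poch (x - n%:R) n = binom_sum n x c.
Proof.
move=> -> -> ok1 ok2; rewrite /F32 /binom_sum mulr_suml; apply: eq_bigr => k _.
have le_kn : (k <= n)%N by rewrite -ltnS.
have dup : poch ((x - n%:R) / 2%:R) k * poch ((1 + x - n%:R) / 2%:R) k * 4%:R ^+ k
           = poch (x - n%:R) (2 * k).
  by rewrite poch_double; congr (_ * poch (_ / _) _ * _); ring.
have shift : poch (x - n%:R) n * poch x k
             = poch (x - n%:R) (2 * k) * poch (x + (2 * k)%:R - n%:R) (n - k).
  have -> : poch (x - n%:R) n * poch x k = poch (x - n%:R) (n + k).
    by rewrite pochD subrK.
  by rewrite -addrAC -pochD; congr poch; lia.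
have nz_fact : k`!%:R != 0 :> F by rewrite pnatr_eq0 -lt0n fact_gt0.
have nz4 : 4%:R ^+ k != 0 :> F by rewrite expf_neq0 // pnatr_eq0.
have nz1 := poch_neq0 k ok1; have nz2 := poch_neq0 k ok2.
rewrite poch_opp_nat -bin_ffact natrM exprVn.
transitivity ((-1) ^+ k * 'C(n, k)%:R * poch c k * (poch (x - n%:R) n * poch x k)
              / (poch ((x - n%:R) / 2%:R) k * poch ((1 + x - n%:R) / 2%:R) k * 4%:R ^+ k)).
  by field; rewrite nz_fact nz1 nz2 nz4.
by rewrite shift -dup; field; rewrite nz1 nz2 nz4.
Qed.

End CharacteristicZero.

Theorem mainTheorem14 (R : realType) (n : nat) (a c : R[i])
  (h1 : lower_ok ((a - n%:R) / 2%:R))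
  (h2 : lower_ok ((1 + a - n%:R) / 2%:R))
  (h3 : lower_ok ((1 + 2%:R * c - a) / 2%:R))
  (h4 : lower_ok ((2%:R + 2%:R * c - a) / 2%:R))
  (h5 : poch (1 - a) n != 0) :
  F32 n a c ((a - n%:R) / 2%:R) ((1 + a - n%:R) / 2%:R) (4%:R)^-1
  = poch (1 + 2%:R * c - a) n / poch (1 - a) n *
    F32 n (1 + 2%:R * c - a + n%:R) c
        ((1 + 2%:R * c - a) / 2%:R) ((2%:R + 2%:R * c - a) / 2%:R) (4%:R)^-1.
Proof.
set b := 1 + 2%:R * c - a.
have e1 : b / 2%:R = (b + n%:R - n%:R) / 2%:R by rewrite addrK.
have e2 : (2%:R + 2%:R * c - a) / 2%:R = (1 + (b + n%:R) - n%:R) / 2%:R.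
  by rewrite /b; ring.
have lhs := F32_binom_sum c (erefl _) (erefl _) h1 h2.
have rhs := F32_binom_sum c e1 e2 h3 h4.
rewrite addrK binom_sum_reflect in rhs.
have nz_b : poch b n != 0.
  apply/poch_neq0/lower_ok_halves; first exact: h3.
  by have -> : b + 1 = 2%:R + 2%:R * c - a by rewrite /b; ring.
have nz_sign : (-1) ^+ n != 0 :> R[i] by rewrite expf_neq0 // oppr_eq0 oner_eq0.
have reflect_a : poch (1 - a) n = (-1) ^+ n * poch (a - n%:R) n.
  by rewrite poch_reflect; congr (_ * poch _ _); ring.
have nz_a : poch (a - n%:R) n != 0.
  by apply: contraNneq h5; rewrite reflect_a => ->; rewrite mulr0.
rewrite reflect_a -[LHS](mulfK nz_a) lhs -[F32 _ (b + _) _ _ _ _](mulfK nz_b) rhs.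
by field; rewrite nz_sign nz_a nz_b.
Qed.
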